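(* Consider two spiking neurons $\hat\sigma$ and $\tilde\sigma$ (same threshold $u_{th}$, reset $V_{reset}$, decay $\beta\in(0,1)$) with the same initial temporal input $\tilde h^0=\hat h^0$, receiving spatial input features $\hat x^t$ and $\tilde x^t$, $t=1,\dots,T$. Suppose $\hat u^T=\hat h^{T-1}+\hat x^T$ is a random variable following a $u_{th}$-Neighborhood-Finite Distribution, that $|\tilde x^t-\hat x^t|\le\epsilon$ for all $t=1,\dots,T$, and that $\hat\sigma^t(\hat x^t)=\tilde\sigma^t(\tilde x^t)$ for $t=1,\dots,T-1$. Then $P[\hat\sigma^T(\hat x^T)\neq\tilde\sigma^T(\tilde x^T)]$ has an upper bound proportional to $\frac{\epsilon}{1-\beta}$ (i.e. it is at most a constant multiple of $\frac{\epsilon}{1-\beta}$, the constant depending only on the distribution of $\hat u^T$).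
   Context: A LIF spiking neuron with firing threshold $u_{th}$, reset potential $V_{reset}$ and decay factor $\beta\in(0,1)$ receives spatial input features $x^1,x^2,\dots$ and evolves by $u^t=h^{t-1}+x^t$, $s^t=\mathrm{Hea}(u^t-u_{th})$, $h^t=V_{reset}s^t+\beta u^t(1-s^t)$, where $\mathrm{Hea}(y)=1$ if $y\ge0$ and $0$ otherwise; the output at timestep $t$ is written $\sigma^t(x^t)=s^t$ (it depends on earlier inputs through $h^{t-1}$). A probability density $p$ is an $m$-Neighborhood-Finite Distribution if there exists $\epsilon>0$ with $\sup_{x\in[m-\epsilon,m+\epsilon]}p(x)<+\infty$. *)

From HB Require Import structures.
From mathcomp Require Import all_boot all_order all_algebra.
From mathcomp Require Import all_classical all_reals all_analysis.
Set Implicit Arguments. Unset Strict Implicit. Unset Printing Implicit Defensive.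
Import Order.TTheory GRing.Theory Num.Theory.
Local Open Scope ring_scope.

Section LIF.
Variable R : realType.

(* Temporal state h^t of a LIF neuron with threshold uth, reset Vreset,
   decay beta, initial temporal input h0 and spatial inputs x 1, x 2, ...
   (x 0 is unused):
     h^0 = h0,  u^t = h^{t-1} + x^t,  s^t = Hea(u^t - uth),
     h^t = Vreset s^t + beta u^t (1 - s^t). *)
Fixpoint lif_h (uth Vreset beta h0 : R) (x : nat -> R) (t : nat) : R :=
  match t with
  | 0 => h0
  | t'.+1 =>
      let u := lif_h uth Vreset beta h0 x t' + x t'.+1 in
      let s : R := if uth <= u then 1 else 0 in
      Vreset * s + beta * u * (1 - s)
  end.

Definition lif_u (uth Vreset beta h0 : R) (x : nat -> R) (t : nat) : R :=
  lif_h uth Vreset beta h0 x t.-1 + x t.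

Definition Hea (y : R) : R := if 0 <= y then 1 else 0.

Definition lif_spike (uth Vreset beta h0 : R) (x : nat -> R) (t : nat) : R :=
  Hea (lif_u uth Vreset beta h0 x t - uth).

Definition neighborhood_finite (p : R -> R) (m : R) : Prop :=
  exists e : R, 0 < e /\ exists M : R, forall x : R, m - e <= x <= m + e -> p x <= M.

End LIF.

(* While the earlier spikes agree, the two neurons take the same branch of the
   update at every step: after a spike both states are reset to [Vreset], otherwise
   the state difference is multiplied by [beta] after adding an input perturbation
   of size at most [eps].  Hence the potentials differ by at most
   [eps (1 + beta + beta^2 + ...) = eps / (1 - beta)] at time [T], and the last
   spikes can only differ when [u-hat^T] lies within [eps / (1 - beta)] of the
   threshold.  A density bounded by [M] near the threshold gives that event
   probability at most [2 M eps / (1 - beta)] for small deviations, and the trivial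
   bound [1] is at most [eps / ((1 - beta) e)] for large ones. *)
From HB Require Import structures.
From mathcomp Require Import all_boot all_order all_algebra.
From mathcomp Require Import all_classical all_reals all_analysis.
From mathcomp Require Import measurable_realfun.
From mathcomp Require Import ring lra.
Import Order.TTheory GRing.Theory Num.Theory.
Local Open Scope classical_set_scope.
Local Open Scope ring_scope.

Section LIFMeasurable.
Variables (R : realType) (d : measure_display) (Omega : measurableType d).
Variables (uth Vreset beta : R) (h0 : Omega -> R) (x : Omega -> nat -> R).
Hypotheses (mh0 : measurable_fun setT h0)
  (mx : forall t, measurable_fun setT (fun w => x w t)).

Lemma measurable_lif_h t :
  measurable_fun setT (fun w => lif_h uth Vreset beta (h0 w) (x w) t).
Proof.
elim: t => [|t IH] //=.
have mu : measurable_fun setT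
    (fun w => lif_h uth Vreset beta (h0 w) (x w) t + x w t.+1).
  exact: measurable_funD.
have ms : measurable_fun setT (fun w =>
    if uth <= lif_h uth Vreset beta (h0 w) (x w) t + x w t.+1 then 1 else 0 : R).
  by apply: measurable_fun_ifT => //; exact: measurable_fun_ler.
apply: measurable_funD; first exact: measurable_funM.
by apply: measurable_funM; [exact: measurable_funM | exact: measurable_funB].
Qed.

Lemma measurable_lif_u t :
  measurable_fun setT (fun w => lif_u uth Vreset beta (h0 w) (x w) t).
Proof. exact: measurable_funD (measurable_lif_h _) (mx _). Qed.

Lemma measurable_lif_spike t :
  measurable_fun setT (fun w => lif_spike uth Vreset beta (h0 w) (x w) t).
Proof.
apply: measurable_fun_ifT => //; apply: measurable_fun_ler => //.
exact: measurable_funB (measurable_lif_u _) _.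
Qed.

End LIFMeasurable.

Lemma measurable_neqr (R : realType) (d : measure_display) (Omega : measurableType d)
    (f g : Omega -> R) :
  measurable_fun setT f -> measurable_fun setT g -> measurable [set w | f w != g w].
Proof.
move=> mf mg.
rewrite [X in measurable X](_ : _ = ~` ((fun w => f w == g w) @^-1` [set true])).
  by apply: measurableC; rewrite -[X in measurable X]setTI; exact: measurable_fun_eqr.
by apply/seteqP; split=> w /=; case: eqP.
Qed.

Lemma measurable_preimage_in {d d' : measure_display} {Omega : measurableType d}
    {T : measurableType d'} {f : Omega -> T} {A : set T} :
  measurable_fun setT f -> measurable A -> measurable [set w | f w \in A].
Proof.
move=> mf mA; rewrite (_ : [set w | _] = f @^-1` A).
  by rewrite -[X in measurable X]setTI; exact: mf.
by apply/seteqP; split=> w; rewrite /= inE.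
Qed.

Lemma eq_Hea (R : realType) (a b : R) : Hea a = Hea b <-> (0 <= a) = (0 <= b).
Proof.
rewrite /Hea; split; case: (0 <= a); case: (0 <= b) => //.
- by move/eqP; rewrite oner_eq0.
- by move/esym/eqP; rewrite oner_eq0.
Qed.

Lemma Hea_neq_near (R : realType) (m a b delta : R) :
  Hea (a - m) != Hea (b - m) -> `|b - a| <= delta -> a \in `[m - delta, m + delta].
Proof.
rewrite /Hea !subr_ge0 in_itv /= ler_norml.
case: (lerP m a); case: (lerP m b) => ? ?; rewrite ?eqxx //= => _ /andP[? ?].
all: by apply/andP; split; lra.
Qed.

Section LIFPerturbation.
Variables (R : realType) (uth Vreset beta eps h0 : R) (xh xt : nat -> R) (T : nat).
Hypotheses (beta_ge0 : 0 <= beta) (beta_lt1 : beta < 1) (eps_ge0 : 0 <= eps).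
Hypothesis dx : forall t, (1 <= t <= T)%N -> `|xt t - xh t| <= eps.
Hypothesis same_spikes : forall t, (1 <= t < T)%N ->
  lif_spike uth Vreset beta h0 xh t = lif_spike uth Vreset beta h0 xt t.

Let h x t := lif_h uth Vreset beta h0 x t.

Let one_minus_beta_neq0 : 1 - beta != 0.
Proof. by rewrite subr_eq0 eq_sym lt_eqF. Qed.

(* [eps * beta / (1 - beta)] is the fixed point of [r |-> beta * (r + eps)]. *)
Lemma lif_h_dist t : (t < T)%N -> `|h xt t - h xh t| <= eps * beta / (1 - beta).
Proof.
have bound_ge0 : 0 <= eps * beta / (1 - beta).
  by rewrite divr_ge0 ?mulr_ge0 // subr_ge0 ltW.
elim: t => [|t IH] ltT; first by rewrite subrr normr0.
have /eq_Hea := same_spikes t.+1 ltT; rewrite /lif_spike /lif_u /= !subr_ge0 => same_branch.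
rewrite /h /= -same_branch; case: ifP => _.
  by rewrite !mulr1 !subrr !mulr0 !addr0 subrr normr0.
rewrite !mulr0 !subr0 !mulr1 !add0r -mulrBr normrM ger0_norm //.
have du : `|h xt t + xt t.+1 - (h xh t + xh t.+1)| <= eps * beta / (1 - beta) + eps.
  rewrite opprD addrACA; apply: le_trans (ler_normD _ _) _.
  exact: lerD (IH (ltnW ltT)) (dx t.+1 (ltnW ltT)).
apply: le_trans (ler_wpM2l beta_ge0 du) _.
by rewrite [leLHS](_ : _ = eps * beta / (1 - beta)) //; field.
Qed.

Lemma lif_u_dist : (1 <= T)%N ->
  `|lif_u uth Vreset beta h0 xt T - lif_u uth Vreset beta h0 xh T| <= eps / (1 - beta).
Proof.
move=> T_ge1; rewrite /lif_u opprD addrACA; apply: le_trans (ler_normD _ _) _.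
have dh : `|h xt T.-1 - h xh T.-1| <= eps * beta / (1 - beta).
  by apply: lif_h_dist; rewrite ltn_predL.
have dxT : `|xt T - xh T| <= eps by apply: dx; rewrite T_ge1 leqnn.
apply: le_trans (lerD dh dxT) _.
by rewrite [leLHS](_ : _ = eps / (1 - beta)) //; field.
Qed.

End LIFPerturbation.

Lemma integral_itv_le_bound {R : realType} {p : R -> R} {a b M : R} :
  (forall x, 0 <= p x) -> measurable_fun setT p ->
  (forall x, a <= x <= b -> p x <= M) -> a <= b ->
  (\int[lebesgue_measure]_(x in `[a, b]) (p x)%:E <= (M * (b - a))%:E)%E.
Proof.
move=> p_ge0 mp p_le_M le_ab.
have mI : measurable [set` `[a, b]] by exact: measurable_itv.
apply: (@le_trans _ _ (\int[lebesgue_measure]_(x in `[a, b]) M%:E)%E).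
  apply: ge0_le_integral => //.
  - by move=> x _; rewrite lee_fin.
  - by apply: measurableT_comp => //; exact: measurable_funS mp.
rewrite integral_cst // [X in (_ * X)%E]lebesgue_measure_itv /= lte_fin.
by case: ltgtP le_ab => // -> _; rewrite subrr mulr0 mule0.
Qed.

Lemma probability_itv_density_le (R : realType) (d : measure_display)
    (Omega : measurableType d) (P : probability Omega R) (U : Omega -> R)
    (p : R -> R) (m e M delta : R) :
  measurable_fun setT U ->
  (forall A : set R, measurable A ->
     P [set w | U w \in A] = (\int[lebesgue_measure]_(x in A) (p x)%:E)%E) ->
  (forall x, 0 <= p x) -> measurable_fun setT p ->
  0 < e -> 0 <= M -> (forall x, m - e <= x <= m + e -> p x <= M) -> 0 <= delta ->
  (P [set w | U w \in [set` (`[m - delta, m + delta])%R]] <= ((2 * M + e^-1) * delta)%:E)%E.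
Proof.
move=> mU density p_ge0 mp e_gt0 M_ge0 p_le_M delta_ge0.
have mI : measurable [set` `[m - delta, m + delta]] by exact: measurable_itv.
case: (lerP delta e) => [le_de|lt_ed].
  have p_le_M' : forall x, m - delta <= x <= m + delta -> p x <= M.
    by move=> x /andP[? ?]; apply: p_le_M; apply/andP; split; lra.
  rewrite (density _ mI).
  apply: le_trans (integral_itv_le_bound p_ge0 mp p_le_M' _) _; first lra.
  rewrite lee_fin mulrDl (_ : M * _ = 2 * M * delta); last by ring.
  by rewrite lerDl mulr_ge0 // invr_ge0 ltW.
have mpre := measurable_preimage_in mU mI.
apply: le_trans (probability_le1 P mpre) _; rewrite lee_fin.
have le1 : 1 <= e^-1 * delta by rewrite mulrC ler_pdivlMr // mul1r ltW.
by apply: le_trans le1 _; rewrite mulrDl lerDr; exact: mulr_ge0 (mulr_ge0 _ _) _.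
Qed.

Theorem lemma3 (R : realType) (uth : R) (p : R -> R)
  (p_ge0 : forall x, 0 <= p x)
  (p_meas : measurable_fun setT p)
  (p_nf : neighborhood_finite p uth) :
  exists C : R,
  forall (Vreset beta eps : R) (T : nat)
    (d : measure_display) (Omega : measurableType d) (P : probability Omega R)
    (h0 : Omega -> R) (xhat xtil : Omega -> nat -> R),
    0 < beta < 1 ->
    (1 <= T)%N ->
    measurable_fun setT h0 ->
    (forall t, measurable_fun setT (fun w => xhat w t)) ->
    (forall t, measurable_fun setT (fun w => xtil w t)) ->
    (* u-hat^T has density p *)
    (forall A : set R, measurable A ->
       P [set w | lif_u uth Vreset beta (h0 w) (xhat w) T \in A]
       = (\int[lebesgue_measure]_(x in A) (p x)%:E)%E) ->
    (forall w t, (1 <= t <= T)%N -> `|xtil w t - xhat w t| <= eps) ->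
    (forall w t, (1 <= t < T)%N ->
       lif_spike uth Vreset beta (h0 w) (xhat w) t
       = lif_spike uth Vreset beta (h0 w) (xtil w) t) ->
    (P [set w | lif_spike uth Vreset beta (h0 w) (xhat w) T
               != lif_spike uth Vreset beta (h0 w) (xtil w) T]
     <= (C * (eps / (1 - beta)))%:E)%E.
Proof.
case: p_nf => e [e_gt0 [M p_le_M]].
exists (2 * Num.max M 0 + e^-1).
move=> Vreset beta eps T d Omega P h0 xhat xtil /andP[beta_gt0 beta_lt1] T_ge1
  mh0 mxhat mxtil density dx same_spikes.
have eps_ge0 : 0 <= eps by apply: le_trans (dx point T _); rewrite ?T_ge1 ?leqnn.
set delta := eps / (1 - beta).
have delta_ge0 : 0 <= delta by rewrite divr_ge0 // subr_ge0 ltW.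
set uhat := fun w => lif_u uth Vreset beta (h0 w) (xhat w) T.
set flip := [set w | lif_spike uth Vreset beta (h0 w) (xhat w) T
                     != lif_spike uth Vreset beta (h0 w) (xtil w) T].
set near := [set w | uhat w \in [set` `[uth - delta, uth + delta]]].
have flip_near : flip `<=` near.
  move=> w /Hea_neq_near near_w; rewrite /near /= inE; apply: near_w.
  exact: lif_u_dist (ltW beta_gt0) beta_lt1 eps_ge0 (dx w) (same_spikes w) T_ge1.
have mflip : measurable flip by apply: measurable_neqr; exact: measurable_lif_spike.
have muhat : measurable_fun setT uhat by exact: measurable_lif_u.
have mnear : measurable near by apply: measurable_preimage_in muhat (measurable_itv _).
apply: le_trans (le_measure _ (mem_set mflip) (mem_set mnear) flip_near) _.
apply: probability_itv_density_le => //.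
- exact: density.
- by rewrite le_max lexx orbT.
- by move=> x /p_le_M /le_trans; apply; rewrite le_max lexx.
Qed.
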